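(* Let $\Phi$ be an irreducible root system with ambient real vector space $\mathbb R\Phi$. Then $\Phi$ is not contained in the union of two hyperplanes (linear subspaces of codimension $1$) of $\mathbb R\Phi$. Moreover, if $H\le\mathbb R\Phi$ is a hyperplane and $\alpha\in\Phi\cap H$, then $\alpha$ has a neighbor in $\Phi\setminus H$.
   Context: Root systems are crystallographic, possibly non-reduced (components of type $\mathsf{BC}_\ell$ are allowed). Two roots $\alpha,\beta$ are called neighbors if they are linearly independent, non-orthogonal, and no root lies in the open cone $\mathbb R_{>0}\alpha+\mathbb R_{>0}\beta$. *)

From mathcomp Require Import all_boot all_order all_algebra.
From mathcomp Require Import reals.
Set Implicit Arguments. Unset Strict Implicit. Unset Printing Implicit Defensive.
Import Order.TTheory GRing.Theory Num.Theory.
Local Open Scope ring_scope.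

Definition dotv (R : realType) (n : nat) (u v : 'rV[R]_n) : R := (u *m v^T) 0 0.

Definition cartan (R : realType) (n : nat) (b a : 'rV[R]_n) : R :=
  2 * dotv b a / dotv a a.

(* A (finite, crystallographic, possibly non-reduced) root system in 'rV[R]_n,
   whose ambient space R Phi is the whole space 'rV[R]_n. *)
Definition root_system (R : realType) (n : nat) (Phi : seq 'rV[R]_n) : Prop :=
  [/\ (<<Phi>>%VS = fullv),
      0 \notin Phi,
      (forall a b, a \in Phi -> b \in Phi -> b - cartan b a *: a \in Phi) &
      (forall a b, a \in Phi -> b \in Phi -> exists z : int, cartan b a = z%:~R)].

Definition irreducible_rs (R : realType) (n : nat) (Phi : seq 'rV[R]_n) : Prop :=
  root_system Phi /\ Phi != [::] /\
  ~ (exists P : pred 'rV[R]_n,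
        (exists2 a, a \in Phi & P a) /\ (exists2 b, b \in Phi & ~~ P b) /\
        (forall a b, a \in Phi -> b \in Phi -> P a -> ~~ P b -> dotv a b = 0)).

Definition hyperplane (R : realType) (n : nat) (H : {vspace 'rV[R]_n}) : Prop :=
  (\dim H).+1 = n.

Definition neighbors (R : realType) (n : nat) (Phi : seq 'rV[R]_n) (a b : 'rV[R]_n) : Prop :=
  [/\ free [:: a; b], dotv a b != 0 &
      ~ (exists c, exists x : R, exists y : R,
            [/\ c \in Phi, 0 < x, 0 < y & c = x *: a + y *: b])].

From mathcomp Require Import all_boot all_order all_algebra.
From mathcomp Require Import reals boolp.
From mathcomp Require Import ring.
Set Implicit Arguments. Unset Strict Implicit. Unset Printing Implicit Defensive.
Import Order.TTheory GRing.Theory Num.Theory.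
Local Open Scope ring_scope.

(* If the roots were covered by two proper subspaces U and V, a root in U \ V
   could not be non-orthogonal to a root in V \ U: the reflection of one in the
   other would lie in neither subspace.  Splitting the roots according to
   whether they are orthogonal to every root of U \ V then decomposes Phi.
   Applied to a hyperplane H containing the root a and to the orthogonal
   complement of a, this yields a root c outside H with (a, c) > 0 (after
   reflecting in a if necessary).  A root in the open cone spanned by a and c
   again lies outside H, pairs positively with a, and spans with a a strictly
   smaller cone; so a root c whose cone with a contains the fewest roots is a
   neighbor of a. *)

Lemma sub_count_lt (T : eqType) (P1 P2 : pred T) (s : seq T) e :
  (forall x, P1 x -> P2 x) -> e \in s -> P2 e -> ~~ P1 e ->
  (count P1 s < count P2 s)%N.
Proof.
move=> sub12; elim: s => // x s IH; rewrite inE => /orP[/eqP<-|es] P2e P1e /=.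
  by rewrite P2e (negbTE P1e) add0n add1n ltnS; apply: sub_count.
have := IH es P2e P1e; case: (boolP (P1 x)) => [/sub12-> | _] lt_s.
  by rewrite ltn_add2l.
by rewrite add0n (leq_trans lt_s) ?leq_addl.
Qed.

Section InnerProduct.
Variables (R : realType) (n : nat).
Implicit Types (u v w : 'rV[R]_n).

Lemma dotvE u v : dotv u v = \sum_i u 0 i * v 0 i.
Proof. by rewrite /dotv !mxE; apply: eq_bigr => i _; rewrite mxE. Qed.

Lemma dotvC u v : dotv u v = dotv v u.
Proof. by rewrite !dotvE; apply: eq_bigr => i _; rewrite mulrC. Qed.

Lemma dotvDl u v w : dotv (u + v) w = dotv u w + dotv v w.
Proof. by rewrite /dotv mulmxDl mxE. Qed.

Lemma dotvZl k u w : dotv (k *: u) w = k * dotv u w.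
Proof. by rewrite /dotv -scalemxAl mxE. Qed.

Lemma dotvBl u v w : dotv (u - v) w = dotv u w - dotv v w.
Proof. by rewrite dotvDl -scaleN1r dotvZl mulN1r. Qed.

Lemma dotvv_ge0 u : 0 <= dotv u u.
Proof. by rewrite dotvE sumr_ge0 // => i _; rewrite -expr2 sqr_ge0. Qed.

Lemma dotvv_eq0 u : (dotv u u == 0) = (u == 0).
Proof.
apply/idP/eqP => [|->]; last by rewrite dotvE big1 // => i _; rewrite mxE mul0r.
rewrite dotvE => /eqP/psumr_eq0P sq0; apply/rowP => i; rewrite mxE.
have /eqP : u 0 i * u 0 i = 0 by apply: sq0 => // j _; rewrite -expr2 sqr_ge0.
by rewrite mulf_eq0 orbb => /eqP.
Qed.

Definition orthv (a : 'rV[R]_n) : {vspace 'rV[R]_n} := lker (linfun (mulmxr a^T)).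

Lemma mem_orthv u a : (u \in orthv a) = (dotv u a == 0).
Proof.
rewrite memv_ker lfunE /dotv /=; apply/eqP/eqP => [-> | uTa0]; first by rewrite mxE.
by apply/matrixP => i j; rewrite !ord1 uTa0 mxE.
Qed.

Lemma dim_rowv : \dim (fullv : {vspace 'rV[R]_n}) = n.
Proof. by rewrite dimvf /dim /= mul1n. Qed.

End InnerProduct.

Section RootSystem.
Variables (R : realType) (n : nat) (Phi : seq 'rV[R]_n).
Hypothesis rsPhi : root_system Phi.

Lemma root_neq0 a : a \in Phi -> a != 0.
Proof. by case: rsPhi => _ Phi0 _ _ aP; apply: contraNneq Phi0 => <-. Qed.

Lemma dotv_root_neq0 a : a \in Phi -> dotv a a != 0.
Proof. by move/root_neq0; rewrite dotvv_eq0. Qed.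

Lemma root_reflect a b : a \in Phi -> b \in Phi -> b - cartan b a *: a \in Phi.
Proof. by case: rsPhi => _ _ reflP _; apply: reflP. Qed.

Lemma cartan_neq0 a b : a \in Phi -> dotv b a != 0 -> cartan b a != 0.
Proof.
move=> aP ba0; rewrite /cartan !mulf_neq0 ?invr_eq0 ?dotv_root_neq0 //.
by rewrite pnatr_eq0.
Qed.

Lemma dotv_reflect a b : a \in Phi -> dotv (b - cartan b a *: a) a = - dotv b a.
Proof.
move/dotv_root_neq0; rewrite dotvBl dotvZl /cartan.
by set d := dotv a a => d0; field.
Qed.

Lemma root_notin_subspace (H : {vspace 'rV[R]_n}) :
  (\dim H < n)%N -> exists2 r, r \in Phi & r \notin H.
Proof.
move=> dimH; have [/hasP[r rP rH]|/hasPn PhiH] := boolP (has [predC H] Phi).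
  by exists r.
have /dimvS : (<<Phi>> <= H)%VS by apply/span_subvP => r /PhiH; rewrite negbK.
by case: rsPhi => -> _ _ _; rewrite dim_rowv leqNgt dimH.
Qed.

Lemma root_notin_hyperplane (H : {vspace 'rV[R]_n}) :
  hyperplane H -> exists2 r, r \in Phi & r \notin H.
Proof. by move=> dimH; apply: root_notin_subspace; apply: eq_leq. Qed.

Section TwoSubspaceCover.
Variables U V : {vspace 'rV[R]_n}.
Hypothesis PhiUV : forall r, r \in Phi -> (r \in U) || (r \in V).

Lemma dotv_cover_eq0 a b : a \in Phi -> b \in Phi ->
  a \in U -> a \notin V -> b \in V -> b \notin U -> dotv a b = 0.
Proof.
move=> aP bP aU aV bV bU; apply/eqP; apply: contraNT aV => ab0.
have cba0 : cartan b a != 0 by rewrite cartan_neq0 // dotvC.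
have [sU|sV] := orP (PhiUV (root_reflect aP bP)).
  by have := memvD sU (memvZ (cartan b a) aU); rewrite subrK (negbTE bU).
have := memvZ (cartan b a)^-1 (memvB bV sV).
by rewrite opprB addrC subrK scalerA mulVf // scale1r.
Qed.

Lemma dotv_cover_orth a x y : a \in Phi -> x \in Phi -> y \in Phi ->
  a \in U -> a \notin V -> dotv x a != 0 ->
  (forall b, b \in Phi -> b \in U -> b \notin V -> dotv y b = 0) ->
  dotv x y = 0.
Proof.
move=> aP xP yP aU aV xa0 yUV.
have [xV|xV] := boolP (x \in V); last first.
  by rewrite dotvC yUV //; move: (PhiUV xP); rewrite (negbTE xV) orbF.
have [xU|xU] := boolP (x \in U); last by rewrite dotvC dotv_cover_eq0 ?eqxx in xa0.
(* reflecting [a] in [x] stays in [U \ V]; [y] is orthogonal to both roots *)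
have s_aU : a - cartan a x *: x \in U by rewrite memvB // memvZ.
have s_aV : a - cartan a x *: x \notin V.
  by apply: contra aV => /memvD/(_ (memvZ (cartan a x) xV)); rewrite subrK.
have cax0 : cartan a x != 0 by rewrite cartan_neq0 // dotvC.
have := yUV _ (root_reflect xP aP) s_aU s_aV.
rewrite dotvC dotvBl dotvZl dotvC (dotvC x) yUV // sub0r => /eqP.
by rewrite oppr_eq0 mulf_eq0 (negbTE cax0) => /eqP.
Qed.

Lemma cover_decomposition :
  (exists2 r, r \in Phi & r \notin U) -> (exists2 r, r \in Phi & r \notin V) ->
  exists P : pred 'rV[R]_n,
    [/\ exists2 a, a \in Phi & P a, exists2 b, b \in Phi & ~~ P b &
        forall a b, a \in Phi -> b \in Phi -> P a -> ~~ P b -> dotv a b = 0].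
Proof.
move=> [r1 r1P r1U] [r2 r2P r2V].
have r1V : r1 \in V by move: (PhiUV r1P); rewrite (negbTE r1U).
have r2U : r2 \in U by move: (PhiUV r2P); rewrite (negbTE r2V) orbF.
pose inUV b := (b \in U) && (b \notin V).
exists (fun x => has (fun b => inUV b && (dotv x b != 0)) Phi); split.
- exists r2 => //; apply/hasP; exists r2 => //.
  by rewrite /inUV r2U r2V dotv_root_neq0.
- exists r1 => //; apply/hasPn => b bP; apply/negP => /andP[/andP[bU bV]].
  by rewrite dotvC (dotv_cover_eq0 bP r1P) ?eqxx.
move=> x y xP yP /hasP[a aP /andP[/andP[aU aV] xa0]] /hasPn yUV.
apply: (dotv_cover_orth aP) => // b bP bU bV.
by have := yUV b bP; rewrite /inUV bU bV negbK => /eqP.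
Qed.

End TwoSubspaceCover.
End RootSystem.

Lemma irreducible_root_notin_union (R : realType) (n : nat) (Phi : seq 'rV[R]_n)
    (U V : {vspace 'rV[R]_n}) :
  irreducible_rs Phi ->
  (exists2 r, r \in Phi & r \notin U) -> (exists2 r, r \in Phi & r \notin V) ->
  exists2 r, r \in Phi & (r \notin U) && (r \notin V).
Proof.
move=> [rsPhi [_ indecomposable] PhiU PhiV].
pose outside r := (r \notin U) && (r \notin V).
have [/hasP[r rP rUV]|/hasPn PhiUV] := boolP (has outside Phi); first by exists r.
case: indecomposable.
have cover r : r \in Phi -> (r \in U) || (r \in V).
  by move/PhiUV; rewrite negb_and !negbK.
by have [P [? ? ?]] := cover_decomposition rsPhi cover PhiU PhiV; exists P.
Qed.

Section OpenCone.
Variables (R : realType) (n : nat).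
Implicit Types (a c e v : 'rV[R]_n).

Definition open_cone a c v : bool :=
  `[< exists x y : R, [/\ 0 < x, 0 < y & v = x *: a + y *: c] >].

Lemma open_coneP a c v :
  reflect (exists x y : R, [/\ 0 < x, 0 < y & v = x *: a + y *: c])
          (open_cone a c v).
Proof. exact: asboolP. Qed.

Lemma open_cone_trans a c e v :
  open_cone a c e -> open_cone a e v -> open_cone a c v.
Proof.
move=> /open_coneP[s [t [s0 t0 ->]]] /open_coneP[p [q [p0 q0 ->]]].
apply/open_coneP; exists (p + q * s), (q * t); split.
- by rewrite addr_gt0 // mulr_gt0.
- by rewrite mulr_gt0.
by rewrite scalerDr !scalerA addrA -scalerDl.
Qed.

Lemma open_cone_selfN a e : a != 0 -> e \notin <[a]>%VS -> ~~ open_cone a e e.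
Proof.
move=> a0 ea; apply/open_coneP => -[p [q [p0 q0 e_pq]]].
have qe_pa : (1 - q) *: e = p *: a by rewrite scalerBl scale1r {1}e_pq addrK.
have [q1|q1] := eqVneq (1 - q) 0.
  move: qe_pa; rewrite q1 scale0r => /esym/eqP.
  by rewrite scaler_eq0 gt_eqF ?(negbTE a0).
move: ea; rewrite -[e]scale1r -(mulVf q1) -scalerA qe_pa.
by rewrite !memvZ ?memv_line.
Qed.

End OpenCone.

Section Neighbor.
Variables (R : realType) (n : nat) (Phi : seq 'rV[R]_n).
Variables (H : {vspace 'rV[R]_n}) (a : 'rV[R]_n).
Hypotheses (rsPhi : root_system Phi) (aP : a \in Phi) (aH : a \in H).

Let a0 : a != 0. Proof. exact: root_neq0 aP. Qed.

Lemma notin_line_root (e : 'rV[R]_n) : e \notin H -> e \notin <[a]>%VS.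
Proof. by apply: contra => /vlineP[k ->]; rewrite memvZ. Qed.

Lemma neighbors_empty_cone c : c \notin H -> dotv a c != 0 ->
  ~~ has (open_cone a c) Phi -> neighbors Phi a c.
Proof.
move=> cH ac0 /hasPn noroot; split => //.
  have /perm_free-> : perm_eq [:: a; c] [:: c; a] by rewrite (perm_catC [:: a]).
  by rewrite free_cons seq1_free span_seq1 notin_line_root.
move=> [e [x [y [eP x0 y0 e_xy]]]].
by have /negP := noroot e eP; apply; apply/open_coneP; exists x, y.
Qed.

Lemma neighbor_or_smaller_cone c : c \notin H -> 0 < dotv a c ->
  neighbors Phi a c \/
  exists2 e, [/\ e \in Phi, e \notin H & 0 < dotv a e] &
    (count (open_cone a e) Phi < count (open_cone a c) Phi)%N.
Proof.
move=> cH ac_gt0.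
have [/hasP[e eP ace]|] := boolP (has (open_cone a c) Phi); last first.
  by left; apply: neighbors_empty_cone; rewrite ?gt_eqF.
have [x [y [x0 y0 e_xy]]] := open_coneP _ _ _ ace.
have eH : e \notin H.
  apply: contra cH => eH.
  have := memvZ y^-1 (memvB eH (memvZ x aH)).
  by rewrite e_xy addrC addKr scalerA mulVf ?gt_eqF // scale1r.
right; exists e.
  split => //; rewrite e_xy dotvC dotvDl !dotvZl (dotvC c) ltr_wpDl ?mulr_gt0 //.
  exact: mulr_ge0 (ltW x0) (dotvv_ge0 a).
apply: (sub_count_lt (e := e)) => // [v|]; first exact: open_cone_trans.
by rewrite open_cone_selfN ?notin_line_root.
Qed.

Lemma neighbor_outside_from c : c \in Phi -> c \notin H -> 0 < dotv a c ->
  exists2 b, (b \in Phi) && (b \notin H) & neighbors Phi a b.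
Proof.
have [k] := ubnP (count (open_cone a c) Phi).
elim: k c => // k IH c lt_ck cP cH ac_gt0.
have [ac|[e [eP eH ae_gt0] lt_ec]] := neighbor_or_smaller_cone cH ac_gt0.
  by exists c; rewrite ?cP.
exact: IH (leq_trans lt_ec lt_ck) eP eH ae_gt0.
Qed.

Lemma root_outside_pos : irreducible_rs Phi -> hyperplane H ->
  exists2 c, (c \in Phi) && (c \notin H) & 0 < dotv a c.
Proof.
move=> irrPhi dimH.
have PhiH := root_notin_hyperplane rsPhi dimH.
have Phia : exists2 r, r \in Phi & r \notin orthv a.
  by exists a; rewrite ?mem_orthv ?(dotv_root_neq0 rsPhi).
have [c cP /andP[cH]] := irreducible_root_notin_union irrPhi PhiH Phia.
rewrite mem_orthv => ca0.
have [ac_gt0|ac_le0] := ltrP 0 (dotv a c); first by exists c; rewrite ?cP.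
exists (c - cartan c a *: a).
  rewrite (root_reflect rsPhi) //=; apply: contra cH => /memvD.
  by move=> /(_ (cartan c a *: a) (memvZ _ aH)); rewrite subrK.
by rewrite dotvC (dotv_reflect rsPhi) // oppr_gt0 lt_neqAle ca0 dotvC ac_le0.
Qed.

End Neighbor.

Theorem lemma1 (R : realType) (n : nat) (Phi : seq 'rV[R]_n) :
  irreducible_rs Phi ->
  (~ exists H1 H2 : {vspace 'rV[R]_n},
       [/\ hyperplane H1, hyperplane H2 &
           forall a, a \in Phi -> (a \in H1) || (a \in H2)]) /\
  (forall (H : {vspace 'rV[R]_n}) (a : 'rV[R]_n),
       hyperplane H -> a \in Phi -> a \in H ->
       exists2 b, (b \in Phi) && (b \notin H) & neighbors Phi a b).
Proof.
move=> irrPhi; have rsPhi : root_system Phi by case: irrPhi.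
split.
  move=> [H1 [H2 [/(root_notin_hyperplane rsPhi) PhiH1
                  /(root_notin_hyperplane rsPhi) PhiH2 cover]]].
  have [r rP /andP[rH1 rH2]] := irreducible_root_notin_union irrPhi PhiH1 PhiH2.
  by move: (cover r rP); rewrite (negbTE rH1) (negbTE rH2).
move=> H a dimH aP aH.
have [c /andP[cP cH] ac_gt0] := root_outside_pos rsPhi aP aH irrPhi dimH.
exact: neighbor_outside_from cP cH ac_gt0.
Qed.
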